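(* Let $p=(p_1,\dots,p_n)$ be pairwise distinct points of $Q$ with $M_{W_i}>0$ for all $i$, and let $p'=(p_1',\dots,p_n')$ be obtained from one step of the higher order Lloyd algorithm, i.e. $p_i'=C_{W_i}$ for each $i$, where $W_i$, $C_{W_i}$ are computed from the order-2 Voronoi partition generated by $p$. Then $\mathcal H(p')\le\mathcal H(p)$, and the inequality is strict unless $p_i=C_{W_i}$ for every $i$.
   Context: $Q\subset\mathbb{R}^2$ is a compact convex polygon, $\phi:Q\to[0,\infty)$ a $C^2$ density, $n\ge3$, $C=\{(a,b):1\le a<b\le n\}$, and $\mathcal H(p_1,\dots,p_n)=\int_Q\min_{(a,b)\in C}\tfrac12(\|q-p_a\|^2+\|q-p_b\|^2)\phi(q)dq$. For $i\ne j$, $V_{\mathcal T_{ij}}=\{q\in Q:\|q-p_v\|\le\|q-p_w\|\ \forall v\in\{i,j\},\ w\notin\{i,j\}\}$ is the order-2 Voronoi cell generated by $\{p_i,p_j\}$; $\mathcal P_i$ is the set of generating pairs containing $i$; $M_V=\int_V\phi$, $C_V=\frac1{M_V}\int_Vq\phi(q)dq$; $W_i=\bigcup_{\mathcal T_{ij}\in\mathcal P_i}V_{\mathcal T_{ij}}$, $M_{W_i}=\sum_{\mathcal T_{ij}\in\mathcal P_i}M_{V_{\mathcal T_{ij}}}$, $C_{W_i}=\frac1{M_{W_i}}\sum_{\mathcal T_{ij}\in\mathcal P_i}M_{V_{\mathcal T_{ij}}}C_{V_{\mathcal T_{ij}}}$. *)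

From Stdlib Require Import Reals Lra List ClassicalEpsilon.
Import ListNotations.
Open Scope R_scope.

Definition pt := (R * R)%type.

Definition dist (a b : pt) : R :=
  sqrt ((fst a - fst b)^2 + (snd a - snd b)^2).

Definition ind (P : Prop) : R :=
  if excluded_middle_informative P then 1 else 0.

(** Total one-dimensional Riemann integral: the value of RiemannInt when
    f is Riemann integrable on [a,b] (an arbitrary real otherwise). *)
Definition RInt (f : R -> R) (a b : R) : R :=
  epsilon (inhabits 0)
    (fun I => exists pr : Riemann_integrable f a b, RiemannInt pr = I).

Definition Int2 (x0 x1 y0 y1 : R) (f : pt -> R) : R :=
  RInt (fun x => RInt (fun y => f (x, y)) y0 y1) x0 x1.

(** A convex polygon given as a finite intersection of closed half-planes
    a*x + b*y <= c, encoded by triples ((a,b),c). *)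
Definition inQ (Q : list (R * R * R)) (q : pt) : Prop :=
  Forall (fun h => let '(a, b, c) := h in a * fst q + b * snd q <= c) Q.

Definition inBox (x0 x1 y0 y1 : R) (q : pt) : Prop :=
  x0 <= fst q <= x1 /\ y0 <= snd q <= y1.

Definition cont2 (f : pt -> R) : Prop :=
  forall p eps, 0 < eps -> exists delta, 0 < delta /\
    forall q, dist q p < delta -> Rabs (f q - f p) < eps.

Definition C1_2 (f : pt -> R) : Prop :=
  exists fx fy : pt -> R,
    (forall p, derivable_pt_lim (fun t => f (t, snd p)) (fst p) (fx p)) /\
    (forall p, derivable_pt_lim (fun t => f (fst p, t)) (snd p) (fy p)) /\
    cont2 f /\ cont2 fx /\ cont2 fy.

Definition C2_2 (f : pt -> R) : Prop :=
  exists fx fy : pt -> R,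
    (forall p, derivable_pt_lim (fun t => f (t, snd p)) (fst p) (fx p)) /\
    (forall p, derivable_pt_lim (fun t => f (fst p, t)) (snd p) (fy p)) /\
    C1_2 fx /\ C1_2 fy.

Definition sumR (l : list R) : R := fold_right Rplus 0 l.
Definition minR (l : list R) : R :=
  match l with nil => 0 | x :: t => fold_right Rmin x t end.

(** C = {(a,b) : 0 <= a < b < n}  (0-based indices) *)
Definition pairs (n : nat) : list (nat * nat) :=
  flat_map (fun b => map (fun a => (a, b)) (seq 0 b)) (seq 0 n).

Definition Hcost (x0 x1 y0 y1 : R) (Q : list (R*R*R)) (phi : pt -> R)
    (n : nat) (p : nat -> pt) : R :=
  Int2 x0 x1 y0 y1 (fun q =>
    ind (inQ Q q) *
    (minR (map (fun ab => / 2 * ((dist q (p (fst ab)))^2 + (dist q (p (snd ab)))^2))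
               (pairs n)) * phi q)).

Definition inV (Q : list (R*R*R)) (n : nat) (p : nat -> pt) (i j : nat) (q : pt) : Prop :=
  inQ Q q /\
  forall v w, (v = i \/ v = j) -> (w < n)%nat -> w <> i -> w <> j ->
    dist q (p v) <= dist q (p w).

Definition genPair (Q : list (R*R*R)) (n : nat) (p : nat -> pt) (i j : nat) : Prop :=
  i <> j /\ (i < n)%nat /\ (j < n)%nat /\ exists q, inV Q n p i j q.

Section Cells.
Variables (x0 x1 y0 y1 : R) (Q : list (R*R*R)) (phi : pt -> R) (n : nat) (p : nat -> pt).

Definition MV (i j : nat) : R :=
  Int2 x0 x1 y0 y1 (fun q => ind (inV Q n p i j q) * phi q).
Definition CVx (i j : nat) : R :=
  / MV i j * Int2 x0 x1 y0 y1 (fun q => ind (inV Q n p i j q) * (fst q * phi q)).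
Definition CVy (i j : nat) : R :=
  / MV i j * Int2 x0 x1 y0 y1 (fun q => ind (inV Q n p i j q) * (snd q * phi q)).

Definition MW (i : nat) : R :=
  sumR (map (fun j => ind (genPair Q n p i j) * MV i j) (seq 0 n)).
Definition CW (i : nat) : pt :=
  ( / MW i * sumR (map (fun j => ind (genPair Q n p i j) * (MV i j * CVx i j)) (seq 0 n)),
    / MW i * sumR (map (fun j => ind (genPair Q n p i j) * (MV i j * CVy i j)) (seq 0 n)) ).
End Cells.

(** Give each point [q] of an order-2 Voronoi cell [V_ij] of [p] the cost
    [|q - z_i|^2 / 2 + |q - z_j|^2 / 2] of the sites [z_i], [z_j] attached to the generators of
    that cell, and integrate against [phi]; call the result [S z].  Since [H] takes the minimum over
    all pairs, [H z <= S z] for every [z]; and [S p = H p], because the cells of [p] overlap only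
    on finitely many lines of equidistance.  Regrouping the cells by site,
    [S z = sum_i int_(W_i) |q - z_i|^2 / 2 phi], so the parallel axis theorem gives
    [S p - S p' = sum_i M_(W_i) |p_i - C_(W_i)|^2 / 2], whence
    [H p' <= S p' = H p - sum_i M_(W_i) |p_i - C_(W_i)|^2 / 2].
    Integrals are iterated Riemann integrals; everything integrated is a continuous function times
    the indicator of a convex polygon, whose vertical sections are segments with endpoints
    depending continuously on the abscissa. *)

From Pilot Require Import Defs.
From Stdlib Require Import Reals Lra Lia List ClassicalEpsilon FunctionalExtensionality.
From Coquelicot Require Import Coquelicot.
Import ListNotations Defs.
Open Scope R_scope.

(* [Defs] shadows Coquelicot's [RInt] and [ind]; [RInt] below is Coquelicot's. *)
Notation RInt := Coquelicot.RInt.RInt.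

Lemma ind_true (P : Prop) : P -> ind P = 1.
Proof. unfold ind; destruct (excluded_middle_informative P); tauto. Qed.

Lemma ind_false (P : Prop) : ~ P -> ind P = 0.
Proof. unfold ind; destruct (excluded_middle_informative P); tauto. Qed.

Lemma ind_iff (P P' : Prop) : (P <-> P') -> ind P = ind P'.
Proof.
intros E; unfold ind.
destruct (excluded_middle_informative P), (excluded_middle_informative P'); tauto.
Qed.

Lemma ind_and (P P' : Prop) : ind (P /\ P') = ind P * ind P'.
Proof.
unfold ind.
destruct (excluded_middle_informative (P /\ P')), (excluded_middle_informative P),
  (excluded_middle_informative P'); tauto || lra.
Qed.

Lemma ind_nonneg (P : Prop) : 0 <= ind P.
Proof. unfold ind; destruct (excluded_middle_informative P); lra. Qed.

Lemma Defs_RInt_eq (f : R -> R) a b : ex_RInt f a b -> Defs.RInt f a b = RInt f a b.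
Proof.
intros Hf. unfold Defs.RInt.
destruct (epsilon_spec (inhabits 0)
  (fun I => exists pr : Riemann_integrable f a b, RiemannInt pr = I)) as [pr <-].
- exists (RiemannInt (ex_RInt_Reals_0 _ _ _ Hf)); eexists; reflexivity.
- symmetry; apply RInt_Reals.
Qed.

Lemma RInt_zero_on (f : R -> R) a b :
  (forall t, Rmin a b < t < Rmax a b -> f t = 0) -> RInt f a b = 0.
Proof.
intros Hf. rewrite (RInt_ext f (fun _ => 0)) by exact Hf.
rewrite RInt_const. apply Rmult_0_r.
Qed.

Lemma ex_RInt_piecewise (f g h : R -> R) a c b : a <= c <= b ->
  ex_RInt f a c -> ex_RInt g c b ->
  (forall t, a < t < c -> h t = f t) -> (forall t, c < t < b -> h t = g t) ->
  ex_RInt h a b.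
Proof.
intros Hc Hf Hg Ef Eg. apply ex_RInt_Chasles with c.
- apply ex_RInt_ext with f; [|exact Hf].
  intros t Ht; rewrite Rmin_left, Rmax_right in Ht by lra; symmetry; auto.
- apply ex_RInt_ext with g; [|exact Hg].
  intros t Ht; rewrite Rmin_left, Rmax_right in Ht by lra; symmetry; auto.
Qed.

Lemma ex_RInt_ind_le (f : R -> R) a b c : a <= b -> ex_RInt f a b ->
  ex_RInt (fun t => ind (t <= c) * f t) a b.
Proof.
intros Hab Hf. set (m := Rmax a (Rmin b c)).
assert (Hm : a <= m <= b) by (unfold m, Rmax, Rmin; repeat destruct Rle_dec; lra).
apply ex_RInt_piecewise with f (fun _ => 0) m; [exact Hm | | apply ex_RInt_const | |].
- exact (ex_RInt_Chasles_1 f a m b Hm Hf).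
- intros t Ht. rewrite ind_true; [ring|]. unfold m, Rmax, Rmin in Ht; repeat destruct Rle_dec; lra.
- intros t Ht. rewrite ind_false; [ring|]. unfold m, Rmax, Rmin in Ht; repeat destruct Rle_dec; lra.
Qed.

Lemma ex_RInt_ind_ge (f : R -> R) a b c : a <= b -> ex_RInt f a b ->
  ex_RInt (fun t => ind (c <= t) * f t) a b.
Proof.
intros Hab Hf. set (m := Rmax a (Rmin b c)).
assert (Hm : a <= m <= b) by (unfold m, Rmax, Rmin; repeat destruct Rle_dec; lra).
apply ex_RInt_piecewise with (fun _ => 0) f m; [exact Hm | apply ex_RInt_const | | |].
- exact (ex_RInt_Chasles_2 f a m b Hm Hf).
- intros t Ht. rewrite ind_false; [ring|]. unfold m, Rmax, Rmin in Ht; repeat destruct Rle_dec; lra.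
- intros t Ht. rewrite ind_true; [ring|]. unfold m, Rmax, Rmin in Ht; repeat destruct Rle_dec; lra.
Qed.

Lemma Rmult_le_iff_pos al be t : 0 < al -> (al * t <= be <-> t <= be / al).
Proof.
intros Hal. assert (E : al * (be / al) = be) by (field; lra).
split; intros H.
- apply Rmult_le_reg_l with al; lra.
- rewrite <- E. apply Rmult_le_compat_l; lra.
Qed.

Lemma Rmult_le_iff_neg al be t : al < 0 -> (al * t <= be <-> be / al <= t).
Proof.
intros Hal. assert (E : - al * (be / al) = - be) by (field; lra).
split; intros H.
- apply Rmult_le_reg_l with (- al); lra.
- assert (- al * (be / al) <= - al * t) by (apply Rmult_le_compat_l; lra). lra.
Qed.

Lemma ex_RInt_ind_halfline (f : R -> R) a b al be : a <= b -> ex_RInt f a b ->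
  ex_RInt (fun t => ind (al * t <= be) * f t) a b.
Proof.
intros Hab Hf. destruct (Rtotal_order al 0) as [Hal | [-> | Hal]].
- apply (ex_RInt_ext (fun t => ind (be / al <= t) * f t)); [|exact (ex_RInt_ind_ge f a b _ Hab Hf)].
  intros t _. rewrite (ind_iff _ _ (Rmult_le_iff_neg al be t Hal)). reflexivity.
- destruct (Rle_dec 0 be) as [Hbe | Hbe].
  + apply (ex_RInt_ext f); [|exact Hf].
    intros t _. rewrite ind_true by lra. symmetry; apply Rmult_1_l.
  + apply (ex_RInt_ext (fun _ => 0)); [|apply ex_RInt_const].
    intros t _. rewrite ind_false by lra. symmetry; apply Rmult_0_l.
- apply (ex_RInt_ext (fun t => ind (t <= be / al) * f t)); [|exact (ex_RInt_ind_le f a b _ Hab Hf)].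
  intros t _. rewrite (ind_iff _ _ (Rmult_le_iff_pos al be t Hal)). reflexivity.
Qed.

Lemma is_RInt_zero_off_finite (f : R -> R) (L : list R) a b : a <= b ->
  (forall t, a < t < b -> ~ In t L -> f t = 0) -> is_RInt f a b 0.
Proof.
revert a b. induction L as [|c L IH]; intros a b Hab Hf.
- apply (is_RInt_ext (fun _ => 0)).
  + intros t Ht. rewrite Rmin_left, Rmax_right in Ht by lra. symmetry. apply Hf; auto.
  + pose proof (@is_RInt_const R_NormedModule a b 0) as H0.
    replace (scal (b - a) (0 : R_NormedModule)) with (zero : R_NormedModule) in H0
      by (symmetry; apply Rmult_0_r).
    exact H0.
- assert (Hsub : forall a' b', a <= a' <= b' -> b' <= b -> (a' < c -> c < b' -> False) ->
    is_RInt f a' b' 0).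
  { intros a' b' Ha' Hb' Hc. apply IH; [lra|]. intros t Ht HL. apply Hf; [lra|].
    intros [E|E]; [subst; lra | auto]. }
  destruct (Rlt_dec a c) as [H1|H1]; [destruct (Rlt_dec c b) as [H2|H2]|].
  + pose proof (is_RInt_Chasles f a c b 0 0) as HC.
    replace (plus (0 : R_NormedModule) 0) with (0 : R_NormedModule) in HC
      by (symmetry; apply Rplus_0_r).
    apply HC; apply Hsub; lra.
  + apply Hsub; lra.
  + apply Hsub; lra.
Qed.

Lemma continuity_pt_eps (f : R -> R) x : continuity_pt f x ->
  forall eps, 0 < eps -> exists d, 0 < d /\ forall x', Rabs (x' - x) < d -> Rabs (f x' - f x) < eps.
Proof.
intros Hf eps He. destruct (proj1 (continuity_pt_locally f x) Hf (mkposreal eps He)) as [d Hd].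
exists d; split; [apply cond_pos | exact Hd].
Qed.

Lemma ex_RInt_continuity (f : R -> R) a b : continuity f -> ex_RInt f a b.
Proof.
intros Hf. apply (@ex_RInt_continuous R_CompleteNormedModule).
intros z _. apply continuity_pt_filterlim, Hf.
Qed.

Lemma continuity_Rmax (f g : R -> R) : continuity f -> continuity g ->
  continuity (fun x => Rmax (f x) (g x)).
Proof.
intros Hf Hg x. apply continuity_pt_locally. intros eps.
apply (filter_imp (fun u => Rabs (f u - f x) < eps /\ Rabs (g u - g x) < eps)).
- intros u [Hu1 Hu2]. apply Rabs_def2 in Hu1, Hu2.
  unfold Rmax; repeat destruct Rle_dec; apply Rabs_def1; lra.
- apply filter_and; apply continuity_pt_locally; auto.
Qed.

Lemma continuity_Rmin (f g : R -> R) : continuity f -> continuity g ->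
  continuity (fun x => Rmin (f x) (g x)).
Proof.
intros Hf Hg x. apply continuity_pt_locally. intros eps.
apply (filter_imp (fun u => Rabs (f u - f x) < eps /\ Rabs (g u - g x) < eps)).
- intros u [Hu1 Hu2]. apply Rabs_def2 in Hu1, Hu2.
  unfold Rmin; repeat destruct Rle_dec; apply Rabs_def1; lra.
- apply filter_and; apply continuity_pt_locally; auto.
Qed.

Definition continuity_2d (g : pt -> R) : Prop :=
  forall x y, continuity_2d_pt (fun u v => g (u, v)) x y.

Lemma continuity_2d_slice (g : pt -> R) x : continuity_2d g -> continuity (fun y => g (x, y)).
Proof.
intros Hg y. apply continuity_pt_locally. intros eps. destruct (Hg x y eps) as [d Hd].
exists d. intros y' Hy'. apply Hd; [|exact Hy']. rewrite Rminus_diag, Rabs_R0. apply cond_pos.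
Qed.

Lemma abs_RInt_le (f : R -> R) a b M : ex_RInt f a b ->
  (forall t, Rmin a b <= t <= Rmax a b -> Rabs (f t) <= M) -> Rabs (RInt f a b) <= Rabs (b - a) * M.
Proof.
intros Hf HM.
exact (norm_RInt_le_const_abs f a b _ M HM (@RInt_correct R_CompleteNormedModule f a b Hf)).
Qed.

Lemma RInt_perturbation_bound (g h : R -> R) y0 y1 a b a' b' e M :
  (forall u v, ex_RInt g u v) -> (forall u v, ex_RInt h u v) ->
  y0 <= a <= y1 -> y0 <= b <= y1 -> y0 <= a' <= y1 -> y0 <= b' <= y1 ->
  (forall t, y0 <= t <= y1 -> Rabs (g t - h t) <= e) ->
  (forall t, y0 <= t <= y1 -> Rabs (h t) <= M) ->
  Rabs (RInt g a' b' - RInt h a b) <= (y1 - y0) * e + (Rabs (a - a') + Rabs (b' - b)) * M.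
Proof.
intros Hg Hh Ha Hb Ha' Hb' He HM.
assert (Hin : forall u v t, y0 <= u <= y1 -> y0 <= v <= y1 -> Rmin u v <= t <= Rmax u v ->
  y0 <= t <= y1) by (intros u v t Hu Hv; unfold Rmin, Rmax; destruct Rle_dec; lra).
assert (Hgh : ex_RInt (fun t => g t - h t) a' b') by (apply (ex_RInt_minus g h); auto).
assert (E : RInt g a' b' - RInt h a b =
  RInt (fun t => g t - h t) a' b' + RInt h a' a + RInt h b b').
{ rewrite (RInt_minus g h) by auto.
  rewrite <- (RInt_Chasles h a' b b'), <- (RInt_Chasles h a' a b) by auto.
  unfold minus, plus, opp; simpl; ring. }
assert (B1 : Rabs (RInt (fun t => g t - h t) a' b') <= Rabs (b' - a') * e)
  by (apply abs_RInt_le; auto; intros t Ht; apply He; eauto).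
assert (B2 : Rabs (RInt h a' a) <= Rabs (a - a') * M)
  by (apply abs_RInt_le; auto; intros t Ht; apply HM; eauto).
assert (B3 : Rabs (RInt h b b') <= Rabs (b' - b) * M)
  by (apply abs_RInt_le; auto; intros t Ht; apply HM; eauto).
assert (Hba : Rabs (b' - a') <= y1 - y0) by (apply Rabs_le; lra).
assert (0 <= e) by (eapply Rle_trans; [apply Rabs_pos | apply (He y0); lra]).
rewrite E. eapply Rle_trans; [apply Rabs_triang|].
eapply Rle_trans; [apply Rplus_le_compat_r, Rabs_triang|].
assert (Rabs (b' - a') * e <= (y1 - y0) * e) by (apply Rmult_le_compat_r; lra).
lra.
Qed.

Lemma continuity_RInt_param (g : pt -> R) (A B : R -> R) y0 y1 :
  continuity_2d g -> continuity A -> continuity B ->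
  (forall x, y0 <= A x <= y1 /\ y0 <= B x <= y1) ->
  continuity (fun x => RInt (fun y => g (x, y)) (A x) (B x)).
Proof.
intros Hg HA HB HAB x. apply continuity_pt_locally. intros eps.
assert (Hy : y0 <= y1) by (destruct (HAB x); lra).
assert (Hex : forall x' u v, ex_RInt (fun y => g (x', y)) u v)
  by (intros; apply ex_RInt_continuity, continuity_2d_slice, Hg).
destruct (continuity_ab_maj (fun t => Rabs (g (x, t))) y0 y1 Hy) as [t0 [HM _]].
{ intros t _. apply (continuity_comp (fun t => g (x, t)) Rabs);
    [apply continuity_2d_slice, Hg | apply Rcontinuity_abs]. }
set (M := Rabs (g (x, t0))). assert (HM0 : 0 <= M) by apply Rabs_pos.
assert (He : 0 < eps / (2 * (y1 - y0 + 1))) by (apply Rdiv_lt_0_compat; [apply cond_pos | lra]).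
assert (He' : 0 < eps / (4 * (M + 1))) by (apply Rdiv_lt_0_compat; [apply cond_pos | lra]).
destruct (uniform_continuity_2d_1d' (fun u v => g (u, v)) y0 y1 x (fun t _ => Hg x t)
  (mkposreal _ He)) as [d Hd].
destruct (continuity_pt_eps A x (HA x) _ He') as [dA [HdA HA']].
destruct (continuity_pt_eps B x (HB x) _ He') as [dB [HdB HB']].
assert (Hdelta : 0 < Rmin d (Rmin dA dB)) by (repeat apply Rmin_glb_lt; auto; apply cond_pos).
exists (mkposreal _ Hdelta). intros x' Hx'. change (Rabs (x' - x) < Rmin d (Rmin dA dB)) in Hx'.
assert (Hmin := Rmin_l d (Rmin dA dB)). assert (HminA := Rmin_l dA dB).
assert (HminB := Rmin_r dA dB). assert (Hmin' := Rmin_r d (Rmin dA dB)).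
assert (Hx'd : Rabs (x' - x) < d) by lra.
specialize (HA' x' ltac:(lra)). specialize (HB' x' ltac:(lra)).
eapply Rle_lt_trans.
{ apply (RInt_perturbation_bound _ _ y0 y1 _ _ _ _ (eps / (2 * (y1 - y0 + 1))) M);
    try apply HAB; auto.
  - intros t Ht. apply Rlt_le. apply Rabs_def2 in Hx'd. apply Hd; try lra.
    rewrite Rminus_diag, Rabs_R0. apply cond_pos. }
assert (T1 : (y1 - y0) * (eps / (2 * (y1 - y0 + 1))) < eps / 2).
{ apply Rmult_lt_reg_l with (2 * (y1 - y0 + 1)); [lra|]. field_simplify; [|lra].
  pose proof (cond_pos eps). nra. }
assert (T2 : (Rabs (A x - A x') + Rabs (B x' - B x)) * M <= 2 * (eps / (4 * (M + 1))) * M).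
{ rewrite Rabs_minus_sym. apply Rmult_le_compat_r; lra. }
assert (T3 : 2 * (eps / (4 * (M + 1))) * M < eps / 2).
{ apply Rmult_lt_reg_l with (4 * (M + 1)); [lra|]. field_simplify; [|lra].
  pose proof (cond_pos eps). nra. }
lra.
Qed.

Lemma continuity_2d_ext (f g : pt -> R) :
  (forall q, f q = g q) -> continuity_2d f -> continuity_2d g.
Proof. intros E Hf x y. apply (continuity_2d_pt_ext (fun u v => f (u, v))); auto. Qed.

Lemma continuity_2d_plus (f g : pt -> R) : continuity_2d f -> continuity_2d g ->
  continuity_2d (fun q => f q + g q).
Proof.
intros Hf Hg x y. apply (continuity_2d_pt_plus (fun u v => f (u, v)) (fun u v => g (u, v))); auto.
Qed.

Lemma continuity_2d_mult (f g : pt -> R) : continuity_2d f -> continuity_2d g ->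
  continuity_2d (fun q => f q * g q).
Proof.
intros Hf Hg x y. apply (continuity_2d_pt_mult (fun u v => f (u, v)) (fun u v => g (u, v))); auto.
Qed.

Lemma continuity_2d_const c : continuity_2d (fun _ => c).
Proof. intros x y. apply continuity_2d_pt_const. Qed.

Lemma continuity_2d_fst : continuity_2d fst.
Proof. intros x y. apply continuity_2d_pt_id1. Qed.

Lemma continuity_2d_snd : continuity_2d snd.
Proof. intros x y. apply continuity_2d_pt_id2. Qed.

Lemma continuity_2d_Rmin (f g : pt -> R) : continuity_2d f -> continuity_2d g ->
  continuity_2d (fun q => Rmin (f q) (g q)).
Proof.
intros Hf Hg x y eps. destruct (Hf x y eps) as [d1 H1], (Hg x y eps) as [d2 H2].
assert (Hd : 0 < Rmin d1 d2) by (apply Rmin_glb_lt; apply cond_pos).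
exists (mkposreal _ Hd). intros u v Hu Hv. simpl in Hu, Hv.
assert (Hm1 := Rmin_l d1 d2). assert (Hm2 := Rmin_r d1 d2).
specialize (H1 u v ltac:(lra) ltac:(lra)). specialize (H2 u v ltac:(lra) ltac:(lra)).
apply Rabs_def2 in H1, H2. unfold Rmin; repeat destruct Rle_dec; apply Rabs_def1; lra.
Qed.

Lemma continuity_2d_minR {A : Type} (l : list A) (F : A -> pt -> R) :
  (forall a, In a l -> continuity_2d (F a)) ->
  continuity_2d (fun q => minR (map (fun a => F a q) l)).
Proof.
destruct l as [|a l]; simpl; intros H; [apply continuity_2d_const|].
assert (Ha : continuity_2d (F a)) by auto.
assert (Hl : forall b, In b l -> continuity_2d (F b)) by auto. clear H.
induction l as [|b l IH]; simpl; [exact Ha|].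
apply continuity_2d_Rmin; [apply Hl; simpl; auto | apply IH; intros; apply Hl; simpl; auto].
Qed.

Lemma dist_sq (q a : pt) : dist q a ^ 2 = (fst q - fst a) ^ 2 + (snd q - snd a) ^ 2.
Proof. unfold dist. apply pow2_sqrt. apply Rplus_le_le_0_compat; apply pow2_ge_0. Qed.

Lemma continuity_2d_dist_sq (a : pt) : continuity_2d (fun q => dist q a ^ 2).
Proof.
apply (continuity_2d_ext
  (fun q => (fst q - fst a) * (fst q - fst a) + (snd q - snd a) * (snd q - snd a))).
- intros q. rewrite dist_sq. ring.
- assert (Hm : forall c, continuity_2d (fun q : pt => - c)) by (intros; apply continuity_2d_const).
  apply continuity_2d_plus; apply continuity_2d_mult; apply continuity_2d_plus;
    auto using continuity_2d_fst, continuity_2d_snd.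
Qed.

Lemma Rabs_le_bounds a b x : a <= x <= b -> Rabs x <= Rabs a + Rabs b.
Proof.
intros Hx. apply Rabs_le.
pose proof (Rle_abs b). pose proof (Rle_abs (- a)). rewrite Rabs_Ropp in *.
pose proof (Rabs_pos a). pose proof (Rabs_pos b). lra.
Qed.

Lemma dist_lt_of_coords (q p : pt) d : Rabs (fst q - fst p) < d -> Rabs (snd q - snd p) < d ->
  dist q p < 2 * d.
Proof.
intros H1 H2. unfold dist.
destruct (sqrt_plus_sqr (fst q - fst p) (snd q - snd p)) as [_ H].
assert (S2 : sqrt 2 <= 2).
{ rewrite <- (sqrt_pow2 2) at 2 by lra. apply sqrt_le_1_alt; lra. }
assert (M : Rmax (Rabs (fst q - fst p)) (Rabs (snd q - snd p)) < d) by (apply Rmax_lub_lt; auto).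
assert (0 <= Rmax (Rabs (fst q - fst p)) (Rabs (snd q - snd p)))
  by (eapply Rle_trans; [apply Rabs_pos | apply Rmax_l]).
assert (0 <= sqrt 2) by apply sqrt_pos.
eapply Rle_lt_trans; [apply H | nra].
Qed.

Lemma cont2_locally_bounded (f : pt -> R) p : cont2 f ->
  exists d B, 0 < d /\ forall q, dist q p < d -> Rabs (f q) <= B.
Proof.
intros H. destruct (H p 1 Rlt_0_1) as [d [Hd Hd']].
exists d, (Rabs (f p) + 1). split; [exact Hd|]. intros q Hq. specialize (Hd' q Hq).
pose proof (Rabs_triang (f q - f p) (f p)). replace (f q - f p + f p) with (f q) in * by ring. lra.
Qed.

Lemma abs_diff_le_derivative_bound (g g' : R -> R) a b B :
  (forall c, Rmin a b <= c <= Rmax a b -> derivable_pt_lim g c (g' c)) ->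
  (forall c, Rmin a b <= c <= Rmax a b -> Rabs (g' c) <= B) ->
  Rabs (g b - g a) <= B * Rabs (b - a).
Proof.
intros Hg HB. destruct (MVT_abs g g' a b Hg) as [c [-> Hc]].
apply Rmult_le_compat_r; [apply Rabs_pos | exact (HB c Hc)].
Qed.

(** By the mean value theorem along the two sides of a rectangle, with the partial derivatives
    locally bounded. *)
Lemma continuity_2d_of_partials (f fx fy : pt -> R) :
  (forall p, derivable_pt_lim (fun t => f (t, snd p)) (fst p) (fx p)) ->
  (forall p, derivable_pt_lim (fun t => f (fst p, t)) (snd p) (fy p)) ->
  cont2 fx -> cont2 fy -> continuity_2d f.
Proof.
intros Dx Dy Cx Cy x y eps.
destruct (cont2_locally_bounded fx (x, y) Cx) as [dx [Bx [Hdx HBx]]].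
destruct (cont2_locally_bounded fy (x, y) Cy) as [dy [By [Hdy HBy]]].
set (K := Rabs Bx + Rabs By + 1).
assert (HK : 0 < K) by (unfold K; pose proof (Rabs_pos Bx); pose proof (Rabs_pos By); lra).
set (d := Rmin (Rmin dx dy / 2) (eps / K)).
assert (Hd : 0 < d).
{ apply Rmin_glb_lt; [|apply Rdiv_lt_0_compat; [apply cond_pos | exact HK]].
  assert (0 < Rmin dx dy) by (apply Rmin_glb_lt; assumption). lra. }
assert (Hdd : d <= Rmin dx dy / 2) by apply Rmin_l.
assert (HdK : K * d <= eps).
{ apply Rle_trans with (K * (eps / K)); [apply Rmult_le_compat_l; [lra | apply Rmin_r]|].
  right; field; lra. }
assert (Hm1 := Rmin_l dx dy). assert (Hm2 := Rmin_r dx dy).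
exists (mkposreal _ Hd). intros u v Hu Hv. simpl in Hu, Hv.
assert (E1 : Rabs (f (u, v) - f (x, v)) <= Rabs Bx * Rabs (u - x)).
{ apply (abs_diff_le_derivative_bound (fun t => f (t, v)) (fun t => fx (t, v))).
  - intros c _. apply (Dx (c, v)).
  - intros c Hc. eapply Rle_trans; [|apply Rle_abs]. apply HBx.
    assert (Rabs (c - x) <= Rabs (u - x))
      by (apply Rabs_le_between_min_max; rewrite Rmin_comm, Rmax_comm; exact Hc).
    replace dx with (2 * (dx / 2)) by field. apply dist_lt_of_coords; simpl; lra. }
assert (E2 : Rabs (f (x, v) - f (x, y)) <= Rabs By * Rabs (v - y)).
{ apply (abs_diff_le_derivative_bound (fun t => f (x, t)) (fun t => fy (x, t))).
  - intros c _. apply (Dy (x, c)).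
  - intros c Hc. eapply Rle_trans; [|apply Rle_abs]. apply HBy.
    assert (Rabs (c - y) <= Rabs (v - y))
      by (apply Rabs_le_between_min_max; rewrite Rmin_comm, Rmax_comm; exact Hc).
    replace dy with (2 * (dy / 2)) by field. apply dist_lt_of_coords; simpl; [|lra].
    rewrite Rminus_diag, Rabs_R0. lra. }
replace (f (u, v) - f (x, y)) with ((f (u, v) - f (x, v)) + (f (x, v) - f (x, y))) by ring.
eapply Rle_lt_trans; [apply Rabs_triang|].
pose proof (Rabs_pos Bx). pose proof (Rabs_pos By). pose proof (Rabs_pos (u - x)).
pose proof (Rabs_pos (v - y)). unfold K in HdK. nra.
Qed.

Lemma C2_2_continuity_2d (f : pt -> R) : C2_2 f -> continuity_2d f.
Proof.
intros [fx [fy [Dx [Dy [[gx [gy [_ [_ [Cx _]]]]] [hx [hy [_ [_ [Cy _]]]]]]]]]].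
exact (continuity_2d_of_partials f fx fy Dx Dy Cx Cy).
Qed.

(** * Iterated integrals over a box *)

Section IteratedIntegral.
Variables x0 x1 y0 y1 : R.

Definition iter_integrable (f : pt -> R) : Prop :=
  (forall x, ex_RInt (fun y => f (x, y)) y0 y1) /\
  ex_RInt (fun x => RInt (fun y => f (x, y)) y0 y1) x0 x1.

Lemma Int2_RInt (f : pt -> R) : iter_integrable f ->
  Int2 x0 x1 y0 y1 f = RInt (fun x => RInt (fun y => f (x, y)) y0 y1) x0 x1.
Proof.
intros [Hin Hout]. unfold Int2. rewrite <- Defs_RInt_eq by exact Hout.
f_equal. apply functional_extensionality. intros x. apply Defs_RInt_eq, Hin.
Qed.

Lemma Int2_ext (f g : pt -> R) : (forall q, f q = g q) -> Int2 x0 x1 y0 y1 f = Int2 x0 x1 y0 y1 g.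
Proof. intros E. f_equal. apply functional_extensionality, E. Qed.

Lemma iter_integrable_ext (f g : pt -> R) : (forall q, f q = g q) ->
  iter_integrable f -> iter_integrable g.
Proof. intros E. replace g with f by (apply functional_extensionality, E). auto. Qed.

Lemma iter_integrable_plus (f g : pt -> R) : iter_integrable f -> iter_integrable g ->
  iter_integrable (fun q => f q + g q).
Proof.
intros [Hf Hf'] [Hg Hg']. split.
- intros x. apply (ex_RInt_plus (fun y => f (x, y)) (fun y => g (x, y))); auto.
- apply (ex_RInt_ext (fun x => RInt (fun y => f (x, y)) y0 y1 + RInt (fun y => g (x, y)) y0 y1)).
  + intros x _. symmetry. apply (RInt_plus (fun y => f (x, y)) (fun y => g (x, y))); auto.
  + apply (ex_RInt_plus (fun x => RInt (fun y => f (x, y)) y0 y1)); auto.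
Qed.

Lemma Int2_plus (f g : pt -> R) : iter_integrable f -> iter_integrable g ->
  Int2 x0 x1 y0 y1 (fun q => f q + g q) = Int2 x0 x1 y0 y1 f + Int2 x0 x1 y0 y1 g.
Proof.
intros Hf Hg. rewrite !Int2_RInt by auto using iter_integrable_plus.
rewrite <- (RInt_plus (fun x => RInt (fun y => f (x, y)) y0 y1)) by apply Hf || apply Hg.
apply RInt_ext. intros x _. apply (RInt_plus (fun y => f (x, y)) (fun y => g (x, y))).
apply Hf. apply Hg.
Qed.

Lemma iter_integrable_scal c (f : pt -> R) :
  iter_integrable f -> iter_integrable (fun q => c * f q).
Proof.
intros [Hf Hf']. split.
- intros x. apply (ex_RInt_scal (fun y => f (x, y))); auto.
- apply (ex_RInt_ext (fun x => c * RInt (fun y => f (x, y)) y0 y1)).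
  + intros x _. symmetry. apply (RInt_scal (fun y => f (x, y))); auto.
  + apply (ex_RInt_scal (fun x => RInt (fun y => f (x, y)) y0 y1)); auto.
Qed.

Lemma Int2_scal c (f : pt -> R) : iter_integrable f ->
  Int2 x0 x1 y0 y1 (fun q => c * f q) = c * Int2 x0 x1 y0 y1 f.
Proof.
intros Hf. rewrite !Int2_RInt by auto using iter_integrable_scal.
rewrite <- (RInt_scal (fun x => RInt (fun y => f (x, y)) y0 y1)) by apply Hf.
apply RInt_ext. intros x _. apply (RInt_scal (fun y => f (x, y))), Hf.
Qed.

Lemma iter_integrable_zero : iter_integrable (fun _ => 0).
Proof.
split; [intros; apply ex_RInt_const|].
apply (ex_RInt_ext (fun _ => 0)); [|apply ex_RInt_const].
intros x _. symmetry. apply RInt_zero_on. reflexivity.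
Qed.

Lemma Int2_zero : Int2 x0 x1 y0 y1 (fun _ => 0) = 0.
Proof.
rewrite Int2_RInt by apply iter_integrable_zero.
apply RInt_zero_on. intros x _. apply RInt_zero_on. reflexivity.
Qed.

Lemma iter_integrable_sum {A : Type} (l : list A) (F : A -> pt -> R) :
  (forall a, In a l -> iter_integrable (F a)) ->
  iter_integrable (fun q => sumR (map (fun a => F a q) l)).
Proof.
induction l as [|a l IH]; intros H; simpl; [apply iter_integrable_zero|].
apply iter_integrable_plus; [apply H; simpl; auto | apply IH; intros; apply H; simpl; auto].
Qed.

Lemma Int2_sum {A : Type} (l : list A) (F : A -> pt -> R) :
  (forall a, In a l -> iter_integrable (F a)) ->
  Int2 x0 x1 y0 y1 (fun q => sumR (map (fun a => F a q) l)) =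
  sumR (map (fun a => Int2 x0 x1 y0 y1 (F a)) l).
Proof.
induction l as [|a l IH]; intros H; simpl; [apply Int2_zero|].
rewrite Int2_plus, IH; auto.
- intros; apply H; simpl; auto.
- apply H; simpl; auto.
- apply iter_integrable_sum. intros; apply H; simpl; auto.
Qed.

Lemma Int2_lin4 (f1 f2 f3 f4 : pt -> R) c1 c2 c3 c4 :
  iter_integrable f1 -> iter_integrable f2 -> iter_integrable f3 -> iter_integrable f4 ->
  Int2 x0 x1 y0 y1 (fun q => c1 * f1 q + c2 * f2 q + c3 * f3 q + c4 * f4 q) =
  c1 * Int2 x0 x1 y0 y1 f1 + c2 * Int2 x0 x1 y0 y1 f2 + c3 * Int2 x0 x1 y0 y1 f3
  + c4 * Int2 x0 x1 y0 y1 f4.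
Proof.
intros H1 H2 H3 H4.
rewrite !Int2_plus, !Int2_scal by auto using iter_integrable_plus, iter_integrable_scal.
reflexivity.
Qed.

Lemma Int2_le (f g : pt -> R) : x0 <= x1 -> y0 <= y1 -> iter_integrable f -> iter_integrable g ->
  (forall q, f q <= g q) -> Int2 x0 x1 y0 y1 f <= Int2 x0 x1 y0 y1 g.
Proof.
intros Hx Hy Hf Hg H. rewrite !Int2_RInt by auto.
apply RInt_le; [exact Hx | apply Hf | apply Hg |].
intros x _. apply RInt_le; [exact Hy | apply Hf | apply Hg | auto].
Qed.

Lemma Int2_zero_off_lines (f : pt -> R) (bx : list R) (bY : R -> list R) :
  x0 <= x1 -> y0 <= y1 -> iter_integrable f ->
  (forall x y, x0 < x < x1 -> y0 < y < y1 -> ~ In x bx -> ~ In y (bY x) -> f (x, y) = 0) ->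
  Int2 x0 x1 y0 y1 f = 0.
Proof.
intros Hx Hy Hf H. rewrite Int2_RInt by exact Hf.
apply is_RInt_unique, (is_RInt_zero_off_finite _ bx); [exact Hx|].
intros x Hx' Hnx. apply is_RInt_unique, (is_RInt_zero_off_finite _ (bY x)); auto.
Qed.

Lemma Int2_eq_off_lines (f g : pt -> R) (bx : list R) (bY : R -> list R) :
  x0 <= x1 -> y0 <= y1 -> iter_integrable f -> iter_integrable g ->
  (forall x y, x0 < x < x1 -> y0 < y < y1 -> ~ In x bx -> ~ In y (bY x) -> f (x, y) = g (x, y)) ->
  Int2 x0 x1 y0 y1 f = Int2 x0 x1 y0 y1 g.
Proof.
intros Hx Hy Hf Hg H.
assert (Hfg : iter_integrable (fun q => f q + -1 * g q))
  by auto using iter_integrable_plus, iter_integrable_scal.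
assert (Z := Int2_zero_off_lines _ bx bY Hx Hy Hfg).
rewrite Int2_plus, Int2_scal in Z by auto using iter_integrable_scal.
assert (Int2 x0 x1 y0 y1 f + -1 * Int2 x0 x1 y0 y1 g = 0)
  by (apply Z; intros; rewrite H by auto; ring).
lra.
Qed.

End IteratedIntegral.

(** * Vertical sections of a convex polygon *)

Lemma inQ_nil q : inQ [] q.
Proof. constructor. Qed.

Lemma inQ_cons a b c K q : inQ (((a, b), c) :: K) q <-> a * fst q + b * snd q <= c /\ inQ K q.
Proof. unfold inQ. rewrite Forall_cons_iff. tauto. Qed.

Lemma inQ_app K1 K2 q : inQ (K1 ++ K2) q <-> inQ K1 q /\ inQ K2 q.
Proof. unfold inQ. apply Forall_app. Qed.

(** For [y] in [[y0, y1]], the point [(x, y)] lies in the polygon [K] iff the constraints of [K]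
    with [b = 0] hold at [x] ([vsec_ok]) and [y] lies between the bounds imposed by those with
    [b < 0] ([vsec_lo]) and [b > 0] ([vsec_hi]). *)
Fixpoint vsec_lo (y0 : R) (K : list (R * R * R)) (x : R) : R :=
  match K with
  | [] => y0
  | ((a, b), c) :: K' =>
      if Rlt_dec b 0 then Rmax ((c - a * x) / b) (vsec_lo y0 K' x) else vsec_lo y0 K' x
  end.

Fixpoint vsec_hi (y1 : R) (K : list (R * R * R)) (x : R) : R :=
  match K with
  | [] => y1
  | ((a, b), c) :: K' =>
      if Rlt_dec 0 b then Rmin ((c - a * x) / b) (vsec_hi y1 K' x) else vsec_hi y1 K' x
  end.

Fixpoint vsec_ok (K : list (R * R * R)) (x : R) : Prop :=
  match K with
  | [] => True
  | ((a, b), c) :: K' => (b = 0 -> a * x <= c) /\ vsec_ok K' x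
  end.

Lemma vsec_lo_ge y0 K x : y0 <= vsec_lo y0 K x.
Proof.
induction K as [|[[a b] c] K IH]; simpl; [lra|].
destruct Rlt_dec; [eapply Rle_trans; [apply IH | apply Rmax_r] | exact IH].
Qed.

Lemma vsec_hi_le y1 K x : vsec_hi y1 K x <= y1.
Proof.
induction K as [|[[a b] c] K IH]; simpl; [lra|].
destruct Rlt_dec; [eapply Rle_trans; [apply Rmin_r | apply IH] | exact IH].
Qed.

Lemma continuity_vsec_lo y0 K : continuity (vsec_lo y0 K).
Proof.
induction K as [|[[a b] c] K IH]; simpl; [reg|].
destruct Rlt_dec; [apply continuity_Rmax; [reg | exact IH] | exact IH].
Qed.

Lemma continuity_vsec_hi y1 K : continuity (vsec_hi y1 K).
Proof.
induction K as [|[[a b] c] K IH]; simpl; [reg|].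
destruct Rlt_dec; [apply continuity_Rmin; [reg | exact IH] | exact IH].
Qed.

Lemma inQ_vsec y0 y1 K x y : y0 <= y <= y1 ->
  (inQ K (x, y) <-> vsec_ok K x /\ vsec_lo y0 K x <= y <= vsec_hi y1 K x).
Proof.
intros Hy. induction K as [|[[a b] c] K IH]; simpl.
- split; [intros; repeat split; lra | intros; apply inQ_nil].
- rewrite inQ_cons, IH; simpl.
  assert (E : a * x + b * y <= c <-> b * y <= c - a * x) by lra. rewrite E.
  destruct (Rlt_dec b 0) as [Hb|Hb]; destruct (Rlt_dec 0 b) as [Hb'|Hb']; try lra.
  + rewrite (Rmult_le_iff_neg b) by exact Hb.
    assert (T := Rmax_l ((c - a * x) / b) (vsec_lo y0 K x)).
    assert (T' := Rmax_r ((c - a * x) / b) (vsec_lo y0 K x)).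
    split; [intros [H1 [H2 H3]] | intros [[_ H2] H3]]; repeat split; auto; try lra.
    apply Rmax_lub; lra.
  + rewrite (Rmult_le_iff_pos b) by exact Hb'.
    assert (T := Rmin_l ((c - a * x) / b) (vsec_hi y1 K x)).
    assert (T' := Rmin_r ((c - a * x) / b) (vsec_hi y1 K x)).
    split; [intros [H1 [H2 H3]] | intros [[_ H2] H3]]; repeat split; auto; try lra.
    apply Rmin_glb; lra.
  + assert (b = 0) by lra. subst b.
    split; [intros [H1 H2]; repeat split; try tauto; intros _; lra
           | intros [[H1 H2] H3]; split; [specialize (H1 eq_refl); lra | tauto]].
Qed.

Lemma ex_RInt_polygon_slice y0 y1 K x (h : R -> R) : y0 <= y1 -> ex_RInt h y0 y1 ->
  ex_RInt (fun y => ind (inQ K (x, y)) * h y) y0 y1.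
Proof.
intros Hy Hh. induction K as [|[[a b] c] K IH].
- apply (ex_RInt_ext h); [|exact Hh]. intros t _. rewrite ind_true by apply inQ_nil.
  symmetry; apply Rmult_1_l.
- apply (ex_RInt_ext (fun y => ind (b * y <= c - a * x) * (ind (inQ K (x, y)) * h y))).
  + intros t _. rewrite (ind_iff _ _ (inQ_cons a b c K (x, t))), ind_and; simpl.
    rewrite (ind_iff (a * x + b * t <= c) (b * t <= c - a * x)) by lra.
    symmetry; apply Rmult_assoc.
  + apply ex_RInt_ind_halfline; auto.
Qed.

Lemma ex_RInt_vsec_ok x0 x1 K (h : R -> R) : x0 <= x1 -> ex_RInt h x0 x1 ->
  ex_RInt (fun x => ind (vsec_ok K x) * h x) x0 x1.
Proof.
intros Hx Hh. induction K as [|[[a b] c] K IH]; simpl.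
- apply (ex_RInt_ext h); [|exact Hh]. intros t _. rewrite ind_true by exact I.
  symmetry; apply Rmult_1_l.
- destruct (Req_dec b 0) as [Hb|Hb].
  + apply (ex_RInt_ext (fun x => ind (a * x <= c) * (ind (vsec_ok K x) * h x))).
    * intros t _. rewrite ind_and, (ind_iff (b = 0 -> a * t <= c) (a * t <= c)) by tauto.
      symmetry; apply Rmult_assoc.
    * apply ex_RInt_ind_halfline; auto.
  + apply (ex_RInt_ext (fun x => ind (vsec_ok K x) * h x)); [|exact IH].
    intros t _. rewrite ind_and, (ind_true (b = 0 -> a * t <= c)) by tauto.
    symmetry; rewrite Rmult_1_l; reflexivity.
Qed.

Definition vsec_bot y0 y1 K x := Rmin (vsec_lo y0 K x) y1.
Definition vsec_top y0 y1 K x := Rmax (vsec_bot y0 y1 K x) (vsec_hi y1 K x).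

Lemma vsec_bot_top_range y0 y1 K x : y0 <= y1 ->
  y0 <= vsec_bot y0 y1 K x <= vsec_top y0 y1 K x /\ vsec_top y0 y1 K x <= y1.
Proof.
intros Hy. unfold vsec_top, vsec_bot.
pose proof (vsec_lo_ge y0 K x). pose proof (vsec_hi_le y1 K x).
unfold Rmin, Rmax; repeat destruct Rle_dec; lra.
Qed.

(** The polygon meets the vertical line at [x] in the segment [[vsec_bot, vsec_top]] when
    [vsec_ok K x] holds; clamping makes the bounds continuous in [x] even where it is empty. *)
Lemma RInt_polygon_slice y0 y1 K x (h : R -> R) : y0 <= y1 -> (forall u v, ex_RInt h u v) ->
  RInt (fun y => ind (inQ K (x, y)) * h y) y0 y1 =
  ind (vsec_ok K x) * RInt h (vsec_bot y0 y1 K x) (vsec_top y0 y1 K x).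
Proof.
intros Hy Hh. set (G := fun y => ind (inQ K (x, y)) * h y).
destruct (classic (vsec_ok K x)) as [Ok | NOk].
2:{ rewrite (ind_false (vsec_ok K x)), Rmult_0_l by exact NOk.
    apply RInt_zero_on. intros t Ht. rewrite Rmin_left, Rmax_right in Ht by lra. unfold G.
    rewrite ind_false; [ring|]. rewrite (inQ_vsec y0 y1) by lra. tauto. }
rewrite (ind_true (vsec_ok K x)), Rmult_1_l by exact Ok.
set (A := vsec_bot y0 y1 K x). set (B := vsec_top y0 y1 K x).
destruct (vsec_bot_top_range y0 y1 K x Hy) as [[HA HAB] HB]; fold A B in HA, HAB, HB.
assert (HG : ex_RInt G y0 y1) by (apply ex_RInt_polygon_slice; auto).
assert (HG1 : ex_RInt G y0 A) by (apply (ex_RInt_Chasles_1 G y0 A y1); [lra | exact HG]).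
assert (HG2 : ex_RInt G A y1) by (apply (ex_RInt_Chasles_2 G y0 A y1); [lra | exact HG]).
assert (HG3 : ex_RInt G A B) by (apply (ex_RInt_Chasles_1 G A B y1); [lra | exact HG2]).
assert (HG4 : ex_RInt G B y1) by (apply (ex_RInt_Chasles_2 G A B y1); [lra | exact HG2]).
assert (Hlo := vsec_lo_ge y0 K x). assert (Hhi := vsec_hi_le y1 K x).
assert (HAlo : A <= vsec_lo y0 K x) by apply Rmin_l.
assert (HBhi : vsec_hi y1 K x <= B) by apply Rmax_r.
rewrite <- (RInt_Chasles G y0 A y1), <- (RInt_Chasles G A B y1) by assumption.
rewrite (RInt_zero_on G y0 A), (RInt_zero_on G B y1), (RInt_ext G h A B).
- unfold plus; simpl; ring.
- intros t Ht. rewrite Rmin_left, Rmax_right in Ht by lra. unfold G.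
  rewrite ind_true; [apply Rmult_1_l|]. rewrite (inQ_vsec y0 y1) by lra. split; [exact Ok|].
  unfold B, A, vsec_top, vsec_bot in *. unfold Rmin, Rmax in *; repeat destruct Rle_dec; lra.
- intros t Ht. rewrite Rmin_left, Rmax_right in Ht by lra. unfold G.
  rewrite ind_false; [apply Rmult_0_l|]. rewrite (inQ_vsec y0 y1) by lra. lra.
- intros t Ht. rewrite Rmin_left, Rmax_right in Ht by lra. unfold G.
  rewrite ind_false; [apply Rmult_0_l|]. rewrite (inQ_vsec y0 y1) by lra. lra.
Qed.

Lemma iter_integrable_polygon x0 x1 y0 y1 K (g : pt -> R) : x0 <= x1 -> y0 <= y1 ->
  continuity_2d g -> iter_integrable x0 x1 y0 y1 (fun q => ind (inQ K q) * g q).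
Proof.
intros Hx Hy Hg.
assert (Hsl : forall x u v, ex_RInt (fun y => g (x, y)) u v)
  by (intros; apply ex_RInt_continuity, continuity_2d_slice, Hg).
split; [intros x; apply ex_RInt_polygon_slice; auto|].
apply (ex_RInt_ext (fun x => ind (vsec_ok K x) *
  RInt (fun y => g (x, y)) (vsec_bot y0 y1 K x) (vsec_top y0 y1 K x))).
- intros x _. symmetry. apply (RInt_polygon_slice y0 y1 K x (fun y => g (x, y))); auto.
- apply ex_RInt_vsec_ok; [exact Hx|]. apply ex_RInt_continuity.
  apply continuity_RInt_param with y0 y1; [exact Hg | | |].
  + apply continuity_Rmin; [apply continuity_vsec_lo | reg].
  + apply continuity_Rmax; [|apply continuity_vsec_hi].
    apply continuity_Rmin; [apply continuity_vsec_lo | reg].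
  + intros x. destruct (vsec_bot_top_range y0 y1 K x Hy). lra.
Qed.

(** * Order-2 Voronoi cells as polygons *)

Lemma dist_nonneg q a : 0 <= dist q a.
Proof. apply sqrt_pos. Qed.

Lemma dist_sq_pos (a b : pt) : a <> b -> 0 < dist a b ^ 2.
Proof.
intros Hab. rewrite dist_sq. destruct a as [a1 a2], b as [b1 b2]; simpl.
assert (Hne : a1 - b1 <> 0 \/ a2 - b2 <> 0).
{ destruct (Req_dec (a1 - b1) 0), (Req_dec (a2 - b2) 0); auto.
  exfalso. apply Hab. f_equal; lra. }
pose proof (pow2_ge_0 (a1 - b1)). pose proof (pow2_ge_0 (a2 - b2)).
destruct Hne as [Hne | Hne]; apply pow2_gt_0 in Hne; lra.
Qed.

Lemma dist_sq_diff (q a b : pt) : dist q b ^ 2 - dist q a ^ 2 =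
  fst b ^ 2 + snd b ^ 2 - (fst a ^ 2 + snd a ^ 2)
  - (2 * (fst b - fst a) * fst q + 2 * (snd b - snd a) * snd q).
Proof. rewrite !dist_sq. ring. Qed.

Definition closer_halfplane (a b : pt) : R * R * R :=
  ((2 * (fst b - fst a), 2 * (snd b - snd a)), fst b ^ 2 + snd b ^ 2 - (fst a ^ 2 + snd a ^ 2)).

Lemma inQ_closer_halfplane q a b : inQ [closer_halfplane a b] q <-> dist q a <= dist q b.
Proof.
unfold closer_halfplane. rewrite inQ_cons. pose proof (dist_sq_diff q a b).
pose proof (dist_nonneg q a). pose proof (dist_nonneg q b).
split; [intros [Hle _] | intros Hle; split; [|apply inQ_nil]].
- apply Rsqr_incr_0_var; [unfold Rsqr; simpl in *; nra | assumption].
- assert (dist q a ^ 2 <= dist q b ^ 2) by nra. simpl. lra.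
Qed.

Definition voronoi2_halfplanes (n : nat) (p : nat -> pt) (i j : nat) : list (R * R * R) :=
  flat_map (fun v => map (fun w => closer_halfplane (p v) (p w))
    (filter (fun w => andb (negb (Nat.eqb w i)) (negb (Nat.eqb w j))) (seq 0 n))) [i; j].

Lemma inQ_forall K q : inQ K q <-> forall h, In h K -> inQ [h] q.
Proof.
unfold inQ. rewrite Forall_forall. split; intros H h Hh.
- constructor; [apply H, Hh | constructor].
- specialize (H h Hh). inversion H; assumption.
Qed.

Lemma inV_polygon Q n p i j q : inV Q n p i j q <-> inQ (Q ++ voronoi2_halfplanes n p i j) q.
Proof.
unfold inV. rewrite inQ_app, (inQ_forall (voronoi2_halfplanes n p i j)).
split; intros [HQ HH]; split; auto.
- intros h Hh. apply in_flat_map in Hh as [v [Hv Hh]]. apply in_map_iff in Hh as [w [<- Hw]].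
  apply filter_In in Hw as [Hw Hwij]. apply in_seq in Hw.
  apply andb_prop in Hwij as [Hwi Hwj].
  apply Bool.negb_true_iff, Nat.eqb_neq in Hwi, Hwj.
  apply inQ_closer_halfplane, HH; [simpl in Hv; intuition | lia | auto | auto].
- intros v w Hv Hw Hwi Hwj. apply inQ_closer_halfplane, HH, in_flat_map.
  exists v. split; [simpl; intuition|]. apply in_map_iff. exists w. split; [reflexivity|].
  apply filter_In. split; [apply in_seq; lia|].
  apply andb_true_intro; split; apply Bool.negb_true_iff, Nat.eqb_neq; auto.
Qed.

Lemma iter_integrable_cell x0 x1 y0 y1 Q n p i j (g : pt -> R) : x0 <= x1 -> y0 <= y1 ->
  continuity_2d g -> iter_integrable x0 x1 y0 y1 (fun q => ind (inV Q n p i j q) * g q).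
Proof.
intros Hx Hy Hg.
apply (iter_integrable_ext _ _ _ _ (fun q => ind (inQ (Q ++ voronoi2_halfplanes n p i j) q) * g q)).
- intros q. rewrite (ind_iff _ _ (inV_polygon Q n p i j q)). reflexivity.
- apply iter_integrable_polygon; auto.
Qed.

(** The points equidistant from [p u] and [p v] lie on a line; it is vertical, at an abscissa in
    [tie_abscissae], or meets the vertical line at [x] at an ordinate in [tie_ordinates x]. *)
Definition tie_rhs (p : nat -> pt) (u v : nat) : R :=
  fst (p v) ^ 2 + snd (p v) ^ 2 - (fst (p u) ^ 2 + snd (p u) ^ 2).

Definition tie_abscissae (n : nat) (p : nat -> pt) : list R :=
  map (fun uv => tie_rhs p (fst uv) (snd uv) / (2 * (fst (p (snd uv)) - fst (p (fst uv)))))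
    (list_prod (seq 0 n) (seq 0 n)).

Definition tie_ordinates (n : nat) (p : nat -> pt) (x : R) : list R :=
  map (fun uv => (tie_rhs p (fst uv) (snd uv) - 2 * (fst (p (snd uv)) - fst (p (fst uv))) * x)
                 / (2 * (snd (p (snd uv)) - snd (p (fst uv)))))
    (list_prod (seq 0 n) (seq 0 n)).

Lemma dist_neq_off_ties n (p : nat -> pt) x y :
  (forall i j, (i < n)%nat -> (j < n)%nat -> i <> j -> p i <> p j) ->
  ~ In x (tie_abscissae n p) -> ~ In y (tie_ordinates n p x) ->
  forall u v, (u < n)%nat -> (v < n)%nat -> u <> v -> dist (x, y) (p u) <> dist (x, y) (p v).
Proof.
intros Hd HX HY u v Hu Hv Huv Heq.
assert (E : 2 * (fst (p v) - fst (p u)) * x + 2 * (snd (p v) - snd (p u)) * y = tie_rhs p u v).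
{ pose proof (dist_sq_diff (x, y) (p u) (p v)) as D. rewrite Heq in D.
  unfold tie_rhs. simpl in D. lra. }
assert (Inp : In (u, v) (list_prod (seq 0 n) (seq 0 n))) by (apply in_prod; apply in_seq; lia).
destruct (Req_dec (snd (p v) - snd (p u)) 0) as [Hs|Hs].
- assert (Hf : fst (p v) - fst (p u) <> 0).
  { intros Hf. apply (Hd u v); auto. destruct (p u), (p v). simpl in *. f_equal; lra. }
  apply HX, in_map_iff. exists (u, v). split; [simpl | exact Inp].
  rewrite Hs in E. field_simplify_eq; lra.
- apply HY, in_map_iff. exists (u, v). split; [simpl | exact Inp].
  field_simplify_eq; lra.
Qed.

Lemma sumR_ext {A : Type} (l : list A) (f g : A -> R) : (forall a, In a l -> f a = g a) ->
  sumR (map f l) = sumR (map g l).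
Proof. induction l as [|a l IH]; simpl; intros H; [reflexivity|]. rewrite H, IH; auto. Qed.

Lemma sumR_nonneg {A : Type} (l : list A) (f : A -> R) : (forall a, In a l -> 0 <= f a) ->
  0 <= sumR (map f l).
Proof.
induction l as [|a l IH]; simpl; intros H; [lra|].
assert (0 <= f a) by auto. assert (0 <= sumR (map f l)) by auto. lra.
Qed.

Lemma sumR_ge_term {A : Type} (l : list A) (f : A -> R) a : (forall x, In x l -> 0 <= f x) ->
  In a l -> f a <= sumR (map f l).
Proof.
induction l as [|b l IH]; simpl; intros H Ha; [contradiction|].
destruct Ha as [<- | Ha].
- assert (0 <= sumR (map f l)) by (apply sumR_nonneg; auto). lra.
- assert (0 <= f b) by auto. assert (f a <= sumR (map f l)) by auto. lra.
Qed.

Lemma sumR_ge_two_terms {A : Type} (l : list A) (f : A -> R) a b : NoDup l ->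
  (forall x, In x l -> 0 <= f x) -> In a l -> In b l -> a <> b -> f a + f b <= sumR (map f l).
Proof.
induction l as [|c l IH]; simpl; intros Hl H Ha Hb Hab; [contradiction|].
inversion Hl; subst.
destruct Ha as [<- | Ha]; destruct Hb as [<- | Hb]; [contradiction | | |].
- assert (f b <= sumR (map f l)) by (apply sumR_ge_term; auto). lra.
- assert (f a <= sumR (map f l)) by (apply sumR_ge_term; auto). lra.
- assert (0 <= f c) by auto. assert (f a + f b <= sumR (map f l)) by auto. lra.
Qed.

Lemma sumR_pos {A : Type} (l : list A) (f : A -> R) a : (forall x, In x l -> 0 <= f x) ->
  In a l -> 0 < f a -> 0 < sumR (map f l).
Proof. intros. assert (f a <= sumR (map f l)) by (apply sumR_ge_term; auto). lra. Qed.

Lemma sumR_zero {A : Type} (l : list A) (f : A -> R) : (forall a, In a l -> f a = 0) ->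
  sumR (map f l) = 0.
Proof. induction l as [|a l IH]; simpl; intros H; [reflexivity|]. rewrite H, IH; auto. ring. Qed.

Lemma sumR_single {A : Type} (l : list A) (f : A -> R) a : NoDup l -> In a l ->
  (forall x, In x l -> x <> a -> f x = 0) -> sumR (map f l) = f a.
Proof.
induction l as [|c l IH]; simpl; intros Hl Ha H; [contradiction|].
inversion Hl; subst. destruct Ha as [<- | Ha].
- rewrite sumR_zero; [ring|]. intros x Hx. apply H; [auto | intros ->; contradiction].
- rewrite H, IH; auto. ring. intros ->; contradiction.
Qed.

Lemma sumR_two_terms {A : Type} (l : list A) (f : A -> R) a b : NoDup l -> In a l -> In b l ->
  a <> b -> (forall x, In x l -> x <> a -> x <> b -> f x = 0) -> sumR (map f l) = f a + f b.
Proof.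
induction l as [|c l IH]; simpl; intros Hl Ha Hb Hab H; [contradiction|].
inversion Hl; subst. destruct Ha as [<- | Ha]; destruct Hb as [<- | Hb]; [contradiction | | |].
- rewrite (sumR_single l f b); auto. intros x Hx Hxb. apply H; auto. intros ->; contradiction.
- rewrite (sumR_single l f a); auto; [ring|].
  intros x Hx Hxa. apply H; auto. intros ->; contradiction.
- rewrite H, IH; auto; [ring | |]; intros ->; contradiction.
Qed.

Lemma sumR_sub {A : Type} (l : list A) (f g : A -> R) :
  sumR (map f l) - sumR (map g l) = sumR (map (fun a => f a - g a) l).
Proof. induction l as [|a l IH]; simpl; [ring|]. rewrite <- IH. ring. Qed.

Lemma sumR_lin4 {A : Type} (l : list A) (e F1 F2 F3 F4 : A -> R) c1 c2 c3 c4 :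
  sumR (map (fun a => e a * (c1 * F1 a + c2 * F2 a + c3 * F3 a + c4 * F4 a)) l) =
  c1 * sumR (map (fun a => e a * F1 a) l) + c2 * sumR (map (fun a => e a * F2 a) l)
  + c3 * sumR (map (fun a => e a * F3 a) l) + c4 * sumR (map (fun a => e a * F4 a) l).
Proof. induction l as [|a l IH]; simpl; [ring|]. rewrite IH. ring. Qed.

Lemma minR_le (l : list R) x : In x l -> minR l <= x.
Proof.
destruct l as [|a l]; simpl; [contradiction|].
revert a. induction l as [|b l IH]; simpl; intros a H.
- destruct H as [-> | []]; lra.
- destruct H as [-> | [-> | H]].
  + eapply Rle_trans; [apply Rmin_r|]. apply (IH x). now left.
  + apply Rmin_l.
  + eapply Rle_trans; [apply Rmin_r|]. apply (IH a). now right.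
Qed.

Lemma minR_ge (l : list R) m : l <> [] -> (forall x, In x l -> m <= x) -> m <= minR l.
Proof.
destruct l as [|a l]; simpl; [tauto|]. intros _ H.
assert (m <= a) by auto. assert (H' : forall x, In x l -> m <= x) by auto. clear H.
induction l as [|b l IH]; simpl; [assumption|].
apply Rmin_glb; [apply H'; simpl; auto | apply IH; intros; apply H'; simpl; auto].
Qed.

Lemma in_pairs n a b : In (a, b) (pairs n) <-> (a < b < n)%nat.
Proof.
unfold pairs. rewrite in_flat_map. split.
- intros [c [Hc H]]. apply in_seq in Hc. apply in_map_iff in H as [d [E Hd]].
  inversion E; subst. apply in_seq in Hd. lia.
- intros H. exists b. split; [apply in_seq; lia|]. apply in_map_iff. exists a.
  split; [reflexivity | apply in_seq; lia].
Qed.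

Definition nearest_pair (e : nat -> R) (n i j : nat) : Prop :=
  forall v w, (v = i \/ v = j) -> (w < n)%nat -> w <> i -> w <> j -> e v <= e w.

Lemma inV_nearest_pair Q n p i j q :
  inV Q n p i j q <-> inQ Q q /\ nearest_pair (fun k => dist q (p k)) n i j.
Proof. reflexivity. Qed.

Lemma nearest_pair_sym e n i j : nearest_pair e n i j -> nearest_pair e n j i.
Proof. intros H v w Hv Hw Hwj Hwi. apply H; tauto. Qed.

Lemma argmin_nat (e : nat -> R) (P : nat -> Prop) n : (exists k, (k < n)%nat /\ P k) ->
  exists m, (m < n)%nat /\ P m /\ forall k, (k < n)%nat -> P k -> e m <= e k.
Proof.
induction n as [|n IH]; intros [k [Hk Pk]]; [lia|].
destruct (classic (exists k, (k < n)%nat /\ P k)) as [Ex | NEx].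
- destruct (IH Ex) as [m [Hm [Pm Hmin]]].
  destruct (classic (P n /\ e n < e m)) as [[Pn Hlt] | Hno].
  + exists n. repeat split; auto. intros k' Hk' Pk'.
    destruct (Nat.eq_dec k' n) as [->|]; [lra|].
    assert (e m <= e k') by (apply Hmin; auto; lia). lra.
  + exists m. repeat split; [lia | exact Pm|]. intros k' Hk' Pk'.
    destruct (Nat.eq_dec k' n) as [->|]; [|apply Hmin; auto; lia].
    destruct (Rlt_dec (e n) (e m)); [exfalso; tauto | lra].
- assert (k = n) as ->
    by (destruct (Nat.eq_dec k n); [auto | exfalso; apply NEx; exists k; split; auto; lia]).
  exists n. repeat split; auto. intros k' Hk' Pk'.
  destruct (Nat.eq_dec k' n) as [->|]; [lra | exfalso; apply NEx; exists k'; split; auto; lia].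
Qed.

Lemma exists_nearest_pair (e : nat -> R) n : (2 <= n)%nat ->
  exists i j, i <> j /\ (i < n)%nat /\ (j < n)%nat /\ nearest_pair e n i j.
Proof.
intros Hn.
destruct (argmin_nat e (fun _ => True) n) as [i [Hi [_ Hmi]]]; [exists 0%nat; split; auto; lia|].
destruct (argmin_nat e (fun k => k <> i) n) as [j [Hj [Hji Hmj]]].
{ destruct (Nat.eq_dec i 0); [exists 1%nat | exists 0%nat]; split; lia. }
exists i, j. repeat split; auto. intros v w [-> | ->] Hw Hwi Hwj; auto.
Qed.

Lemma nearest_pair_sq_min (e : nat -> R) n i j a b : (forall k, 0 <= e k) ->
  i <> j -> a <> b -> (a < n)%nat -> (b < n)%nat -> nearest_pair e n i j ->
  e i ^ 2 + e j ^ 2 <= e a ^ 2 + e b ^ 2.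
Proof.
intros He Hij Hab Ha Hb V.
assert (M : forall v w, (v = i \/ v = j) -> (w < n)%nat -> w <> i -> w <> j -> e v ^ 2 <= e w ^ 2).
{ intros v w Hv Hw Hwi Hwj. pose proof (V v w Hv Hw Hwi Hwj). pose proof (He v). nra. }
destruct (Nat.eq_dec a i), (Nat.eq_dec a j), (Nat.eq_dec b i), (Nat.eq_dec b j); subst;
  try lia; try lra.
- assert (e j ^ 2 <= e b ^ 2) by (apply M; auto). lra.
- assert (e i ^ 2 <= e b ^ 2) by (apply M; auto). lra.
- assert (e j ^ 2 <= e a ^ 2) by (apply M; auto). lra.
- assert (e i ^ 2 <= e a ^ 2) by (apply M; auto). lra.
- assert (e i ^ 2 <= e a ^ 2) by (apply M; auto).
  assert (e j ^ 2 <= e b ^ 2) by (apply M; auto). lra.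
Qed.

Lemma nearest_pair_unique (e : nat -> R) n i j a b :
  (forall u v, (u < n)%nat -> (v < n)%nat -> u <> v -> e u <> e v) ->
  i <> j -> (i < n)%nat -> (j < n)%nat -> nearest_pair e n i j ->
  a <> b -> (a < n)%nat -> (b < n)%nat -> nearest_pair e n a b ->
  (a = i /\ b = j) \/ (a = j /\ b = i).
Proof.
intros D Hij Hi Hj Vij Hab Ha Hb Vab.
assert (Ii : a = i \/ b = i).
{ destruct (Nat.eq_dec a i); auto. destruct (Nat.eq_dec b i); auto. exfalso.
  assert (e a <= e i) by (apply Vab; auto). assert (e b <= e i) by (apply Vab; auto).
  destruct (Nat.eq_dec a j) as [->|].
  2:{ assert (e i <= e a) by (apply Vij; auto). apply (D a i); auto. lra. }
  assert (e i <= e b) by (apply Vij; auto). apply (D b i); auto. lra. }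
assert (Ij : a = j \/ b = j).
{ destruct (Nat.eq_dec a j); auto. destruct (Nat.eq_dec b j); auto. exfalso.
  assert (e a <= e j) by (apply Vab; auto). assert (e b <= e j) by (apply Vab; auto).
  destruct Ii as [-> | ->].
  - assert (e j <= e b) by (apply Vij; auto). apply (D b j); auto. lra.
  - assert (e j <= e a) by (apply Vij; auto). apply (D a j); auto. lra. }
destruct Ii, Ij; subst; auto; lia.
Qed.

(** * One step of the higher order Lloyd algorithm *)

Ltac continuity_2d_auto :=
  repeat first [ assumption | apply continuity_2d_const | apply continuity_2d_fst
    | apply continuity_2d_snd | apply continuity_2d_dist_sq
    | apply continuity_2d_plus | apply continuity_2d_mult ].

Section LloydStep.
Variables (Q : list (R * R * R)) (x0 x1 y0 y1 : R) (phi : pt -> R) (n : nat) (p : nat -> pt).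
Hypothesis Hx : x0 <= x1.
Hypothesis Hy : y0 <= y1.
Hypothesis HQbox : forall q, inQ Q q -> inBox x0 x1 y0 y1 q.
Hypothesis Hphi : continuity_2d phi.
Hypothesis Hphi_nonneg : forall q, inQ Q q -> 0 <= phi q.
Hypothesis Hn : (2 <= n)%nat.
Hypothesis Hdistinct : forall i j, (i < n)%nat -> (j < n)%nat -> i <> j -> p i <> p j.

Local Notation M_V := (MV x0 x1 y0 y1 Q phi n p).
Local Notation M_W := (MW x0 x1 y0 y1 Q phi n p).
Local Notation C_W := (CW x0 x1 y0 y1 Q phi n p).
Local Notation C_Vx := (CVx x0 x1 y0 y1 Q phi n p).
Local Notation C_Vy := (CVy x0 x1 y0 y1 Q phi n p).

Definition pair_cost (z : nat -> pt) (q : pt) (ab : nat * nat) : R :=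
  / 2 * (dist q (z (fst ab)) ^ 2 + dist q (z (snd ab)) ^ 2).

Definition cost_density (z : nat -> pt) (q : pt) : R :=
  ind (inQ Q q) * (minR (map (pair_cost z q) (pairs n)) * phi q).

Lemma Hcost_Int2 z : Hcost x0 x1 y0 y1 Q phi n z = Int2 x0 x1 y0 y1 (cost_density z).
Proof. reflexivity. Qed.

(** Site [i]'s share of the cost of the cell [V_ij] when [T_ij] is a generating pair. *)
Definition cell_term (z : nat -> pt) (i j : nat) (q : pt) : R :=
  ind (genPair Q n p i j) * (ind (inV Q n p i j q) * (/ 2 * dist q (z i) ^ 2 * phi q)).

Definition partition_density (z : nat -> pt) (q : pt) : R :=
  sumR (map (fun i => sumR (map (fun j => cell_term z i j q) (seq 0 n))) (seq 0 n)).

Lemma pair_cost_sym z q a b : pair_cost z q (a, b) = pair_cost z q (b, a).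
Proof. unfold pair_cost; simpl; ring. Qed.

Lemma minR_pair_cost_le z q i j : (i < n)%nat -> (j < n)%nat -> i <> j ->
  minR (map (pair_cost z q) (pairs n)) <= pair_cost z q (i, j).
Proof.
intros Hi Hj Hij. destruct (Nat.lt_ge_cases i j).
- apply minR_le, in_map, in_pairs. lia.
- rewrite pair_cost_sym. apply minR_le, in_map, in_pairs. lia.
Qed.

Lemma minR_pair_cost_nearest z q i j : (i < n)%nat -> (j < n)%nat -> i <> j ->
  nearest_pair (fun k => dist q (z k)) n i j ->
  minR (map (pair_cost z q) (pairs n)) = pair_cost z q (i, j).
Proof.
intros Hi Hj Hij V. apply Rle_antisym; [apply minR_pair_cost_le; auto|].
apply minR_ge.
- intros E. assert (H01 : In (0, 1)%nat (pairs n)) by (apply in_pairs; lia).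
  apply (in_map (pair_cost z q)) in H01. rewrite E in H01. contradiction.
- intros c Hc. apply in_map_iff in Hc as [[a b] [<- Hab]]. apply in_pairs in Hab.
  unfold pair_cost; simpl.
  assert (dist q (z i) ^ 2 + dist q (z j) ^ 2 <= dist q (z a) ^ 2 + dist q (z b) ^ 2)
    by (apply (nearest_pair_sq_min (fun k => dist q (z k)) n); auto using dist_nonneg; lia).
  lra.
Qed.

Lemma cell_term_nonneg z i j q : 0 <= cell_term z i j q.
Proof.
unfold cell_term. apply Rmult_le_pos; [apply ind_nonneg|].
destruct (classic (inV Q n p i j q)) as [Hv | Hv].
- rewrite ind_true, Rmult_1_l by exact Hv.
  assert (0 <= phi q) by (apply Hphi_nonneg, Hv). pose proof (pow2_ge_0 (dist q (z i))).
  apply Rmult_le_pos; lra.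
- rewrite ind_false by exact Hv. lra.
Qed.

Lemma cell_term_in z i j q : genPair Q n p i j -> inV Q n p i j q ->
  cell_term z i j q = / 2 * dist q (z i) ^ 2 * phi q.
Proof. intros. unfold cell_term. rewrite !ind_true by assumption. ring. Qed.

Lemma cell_term_out z i j q : ~ (genPair Q n p i j /\ inV Q n p i j q) -> cell_term z i j q = 0.
Proof.
intros H. unfold cell_term. destruct (classic (genPair Q n p i j)).
- rewrite (ind_false (inV Q n p i j q)) by tauto. ring.
- rewrite (ind_false (genPair Q n p i j)) by tauto. ring.
Qed.

Lemma exists_cell_containing q : inQ Q q ->
  exists i j, i <> j /\ (i < n)%nat /\ (j < n)%nat /\
    nearest_pair (fun k => dist q (p k)) n i j /\
    genPair Q n p i j /\ genPair Q n p j i /\ inV Q n p i j q /\ inV Q n p j i q.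
Proof.
intros HQ. destruct (exists_nearest_pair (fun k => dist q (p k)) n Hn) as [i [j [Hij [Hi [Hj V]]]]].
assert (Hv : inV Q n p i j q) by (apply inV_nearest_pair; auto).
assert (Hv' : inV Q n p j i q) by (apply inV_nearest_pair; auto using nearest_pair_sym).
assert (G : genPair Q n p i j) by (repeat split; auto; exists q; exact Hv).
assert (G' : genPair Q n p j i) by (repeat split; auto; exists q; exact Hv').
exists i, j. tauto.
Qed.

Lemma cost_density_le_partition z q : cost_density z q <= partition_density z q.
Proof.
destruct (classic (inQ Q q)) as [HQ | HQ].
2:{ unfold cost_density. rewrite ind_false, Rmult_0_l by exact HQ.
    apply sumR_nonneg. intros i _. apply sumR_nonneg. intros j _. apply cell_term_nonneg. }
destruct (exists_cell_containing q HQ) as [i [j [Hij [Hi [Hj [_ [G [G' [Hv Hv']]]]]]]]].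
assert (Hin : forall k, (k < n)%nat -> In k (seq 0 n)) by (intros; apply in_seq; lia).
assert (L : cell_term z i j q + cell_term z j i q <= partition_density z q).
{ eapply Rle_trans; [|apply (sumR_ge_two_terms (seq 0 n)
    (fun i => sumR (map (fun j => cell_term z i j q) (seq 0 n))) i j); auto using seq_NoDup].
  - apply Rplus_le_compat; apply (sumR_ge_term (seq 0 n) (fun k => cell_term z _ k q));
      auto using cell_term_nonneg.
  - intros k _. apply sumR_nonneg. intros; apply cell_term_nonneg. }
rewrite !cell_term_in in L by assumption.
unfold cost_density. rewrite ind_true, Rmult_1_l by exact HQ.
assert (0 <= phi q) by auto.
assert (minR (map (pair_cost z q) (pairs n)) * phi q <= pair_cost z q (i, j) * phi q)
  by (apply Rmult_le_compat_r; auto using minR_pair_cost_le).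
unfold pair_cost in *; simpl in *. lra.
Qed.

(** Off the lines of equidistance, a point lies in exactly one cell. *)
Lemma cost_density_eq_partition q :
  (forall u v, (u < n)%nat -> (v < n)%nat -> u <> v -> dist q (p u) <> dist q (p v)) ->
  partition_density p q = cost_density p q.
Proof.
intros Dq. unfold partition_density.
destruct (classic (inQ Q q)) as [HQ | HQ].
2:{ unfold cost_density. rewrite ind_false, Rmult_0_l by exact HQ.
    apply sumR_zero. intros i _. apply sumR_zero. intros j _.
    apply cell_term_out. intros [_ [HQ' _]]. contradiction. }
destruct (exists_cell_containing q HQ) as [i [j [Hij [Hi [Hj [V [G [G' [Hv Hv']]]]]]]]].
assert (U : forall a b, genPair Q n p a b -> inV Q n p a b q ->
  (a = i /\ b = j) \/ (a = j /\ b = i)).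
{ intros a b [Hab [Ha [Hb _]]] Hva.
  apply (nearest_pair_unique (fun k => dist q (p k)) n); auto. exact (proj2 Hva). }
assert (Hin : forall k, (k < n)%nat -> In k (seq 0 n)) by (intros; apply in_seq; lia).
rewrite (sumR_two_terms (seq 0 n) _ i j); auto using seq_NoDup.
- rewrite (sumR_single (seq 0 n) _ j), (sumR_single (seq 0 n) _ i); auto using seq_NoDup.
  + rewrite !cell_term_in by assumption. unfold cost_density.
    rewrite ind_true, (minR_pair_cost_nearest p q i j) by auto. unfold pair_cost; simpl; ring.
  + intros b _ Hb. apply cell_term_out. intros [Ga Hva]. destruct (U j b Ga Hva); lia.
  + intros b _ Hb. apply cell_term_out. intros [Ga Hva]. destruct (U i b Ga Hva); lia.
- intros a _ Ha Hb. apply sumR_zero. intros b _. apply cell_term_out. intros [Ga Hva].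
  destruct (U a b Ga Hva); lia.
Qed.

Definition cell_integral (i j : nat) (g : pt -> R) : R :=
  Int2 x0 x1 y0 y1 (fun q => ind (inV Q n p i j q) * g q).

Lemma iter_integrable_cell_term z i j : iter_integrable x0 x1 y0 y1 (cell_term z i j).
Proof.
apply iter_integrable_scal, iter_integrable_cell; auto. continuity_2d_auto.
Qed.

Lemma iter_integrable_partition_density z : iter_integrable x0 x1 y0 y1 (partition_density z).
Proof.
apply (iter_integrable_sum _ _ _ _ _
  (fun i q => sumR (map (fun j => cell_term z i j q) (seq 0 n)))).
intros i _. apply (iter_integrable_sum _ _ _ _ _ (fun j => cell_term z i j)).
intros j _. apply iter_integrable_cell_term.
Qed.

Lemma iter_integrable_cost_density z : iter_integrable x0 x1 y0 y1 (cost_density z).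
Proof.
apply iter_integrable_polygon; auto. apply continuity_2d_mult; [|exact Hphi].
apply (continuity_2d_minR (pairs n) (fun ab q => pair_cost z q ab)). intros ab _.
unfold pair_cost. continuity_2d_auto.
Qed.

Lemma Int2_cell_term z i j : Int2 x0 x1 y0 y1 (cell_term z i j) = ind (genPair Q n p i j) *
  (/ 2 * cell_integral i j (fun q => (fst q ^ 2 + snd q ^ 2) * phi q)
   + - fst (z i) * cell_integral i j (fun q => fst q * phi q)
   + - snd (z i) * cell_integral i j (fun q => snd q * phi q)
   + / 2 * (fst (z i) ^ 2 + snd (z i) ^ 2) * M_V i j).
Proof.
unfold cell_term. rewrite Int2_scal by (apply iter_integrable_cell; auto; continuity_2d_auto).
f_equal. unfold cell_integral, MV.
rewrite <- Int2_lin4 by (apply iter_integrable_cell; auto; continuity_2d_auto).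
apply Int2_ext. intros q. rewrite dist_sq. field.
Qed.

Lemma cell_integral_null_mass i j (h : pt -> R) B : continuity_2d h ->
  (forall q, inQ Q q -> Rabs (h q) <= B) -> M_V i j = 0 ->
  cell_integral i j (fun q => h q * phi q) = 0.
Proof.
intros Hh HB HM. unfold cell_integral.
set (chi q := ind (inV Q n p i j q)).
change (Int2 x0 x1 y0 y1 (fun q => chi q * phi q) = 0) in HM.
change (Int2 x0 x1 y0 y1 (fun q => chi q * (h q * phi q)) = 0).
assert (Iphi : iter_integrable x0 x1 y0 y1 (fun q => chi q * phi q))
  by (apply iter_integrable_cell; auto).
assert (Ihphi : iter_integrable x0 x1 y0 y1 (fun q => chi q * (h q * phi q)))
  by (apply iter_integrable_cell; auto; continuity_2d_auto).
assert (Hsq : forall q,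
  - B * (chi q * phi q) <= chi q * (h q * phi q) <= B * (chi q * phi q)).
{ intros q. unfold chi. destruct (classic (inV Q n p i j q)) as [Hv | Hv].
  - rewrite ind_true by exact Hv. destruct Hv as [HQ _].
    specialize (HB q HQ). specialize (Hphi_nonneg q HQ). apply Rabs_le_between in HB. nra.
  - rewrite ind_false by exact Hv. lra. }
assert (L1 : Int2 x0 x1 y0 y1 (fun q => - B * (chi q * phi q)) <=
  Int2 x0 x1 y0 y1 (fun q => chi q * (h q * phi q)))
  by (apply Int2_le; auto using iter_integrable_scal; intros; apply Hsq).
assert (L2 : Int2 x0 x1 y0 y1 (fun q => chi q * (h q * phi q)) <=
  Int2 x0 x1 y0 y1 (fun q => B * (chi q * phi q)))
  by (apply Int2_le; auto using iter_integrable_scal; intros; apply Hsq).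
rewrite Int2_scal, HM in L1, L2 by exact Iphi. lra.
Qed.

Lemma cell_integral_mass_factor i j (h : pt -> R) B : continuity_2d h ->
  (forall q, inQ Q q -> Rabs (h q) <= B) ->
  cell_integral i j (fun q => h q * phi q) =
  M_V i j * (/ M_V i j * cell_integral i j (fun q => h q * phi q)).
Proof.
intros Hh HB. destruct (Req_dec (M_V i j) 0) as [H0 | H0]; [|field; exact H0].
rewrite H0, (cell_integral_null_mass i j h B) by assumption. ring.
Qed.

(** [site_cost z i] is the cost of [W_i] for a site at [z i]: a quadratic in [z i] whose
    linear part is [- z i . (M_{W_i} C_{W_i})]. *)
Definition site_cost (z : nat -> pt) (i : nat) : R :=
  let gen j := ind (genPair Q n p i j) in
  / 2 * sumR (map (fun j =>
    gen j * cell_integral i j (fun q => (fst q ^ 2 + snd q ^ 2) * phi q)) (seq 0 n))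
  + - fst (z i) * sumR (map (fun j => gen j * (M_V i j * C_Vx i j)) (seq 0 n))
  + - snd (z i) * sumR (map (fun j => gen j * (M_V i j * C_Vy i j)) (seq 0 n))
  + / 2 * (fst (z i) ^ 2 + snd (z i) ^ 2) * M_W i.

Lemma Int2_partition_density z :
  Int2 x0 x1 y0 y1 (partition_density z) = sumR (map (site_cost z) (seq 0 n)).
Proof.
unfold partition_density.
rewrite (Int2_sum _ _ _ _ _ (fun i q => sumR (map (fun j => cell_term z i j q) (seq 0 n))))
  by (intros; apply (iter_integrable_sum _ _ _ _ _ (fun j => cell_term z _ j));
      intros; apply iter_integrable_cell_term).
apply sumR_ext. intros i _.
rewrite (Int2_sum _ _ _ _ _ (fun j => cell_term z i j))
  by (intros; apply iter_integrable_cell_term).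
erewrite sumR_ext; [rewrite sumR_lin4; reflexivity|].
intros j _. rewrite Int2_cell_term.
rewrite (cell_integral_mass_factor i j fst (Rabs x0 + Rabs x1)),
  (cell_integral_mass_factor i j snd (Rabs y0 + Rabs y1)) by
  (auto using continuity_2d_fst, continuity_2d_snd;
   intros q Hq; destruct (HQbox q Hq); apply Rabs_le_bounds; tauto).
reflexivity.
Qed.

(** The parallel axis theorem for [W_i]. *)
Lemma site_cost_centroid_gap i : 0 < M_W i ->
  site_cost p i - site_cost C_W i =
  / 2 * M_W i * dist (p i) (C_W i) ^ 2.
Proof. intros HM. rewrite dist_sq. unfold site_cost, CW. simpl. field. lra. Qed.

Lemma Hcost_lloyd_step :
  (forall i, (i < n)%nat -> 0 < M_W i) ->
  Hcost x0 x1 y0 y1 Q phi n C_W <=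
  Hcost x0 x1 y0 y1 Q phi n p - sumR (map (fun i =>
    / 2 * M_W i * dist (p i) (C_W i) ^ 2) (seq 0 n)).
Proof.
intros HMW. set (c := C_W). rewrite !Hcost_Int2.
assert (Hc : Int2 x0 x1 y0 y1 (cost_density c) <= Int2 x0 x1 y0 y1 (partition_density c)).
{ apply Int2_le; auto using iter_integrable_cost_density, iter_integrable_partition_density.
  apply cost_density_le_partition. }
assert (Hp : Int2 x0 x1 y0 y1 (partition_density p) = Int2 x0 x1 y0 y1 (cost_density p)).
{ apply (Int2_eq_off_lines _ _ _ _ _ _ (tie_abscissae n p) (tie_ordinates n p));
    auto using iter_integrable_cost_density, iter_integrable_partition_density.
  intros x y _ _ HX HY. apply cost_density_eq_partition, dist_neq_off_ties; auto. }
rewrite Int2_partition_density in Hc. rewrite <- Hp, Int2_partition_density, sumR_sub.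
rewrite (sumR_ext _ _ (site_cost c)); [exact Hc|].
intros i Hi. apply in_seq in Hi.
unfold c. rewrite <- site_cost_centroid_gap by (apply HMW; lia). ring.
Qed.

End LloydStep.

Theorem mainTheorem6
  (Q : list (R * R * R)) (x0 x1 y0 y1 : R) (phi : pt -> R) (n : nat) (p : nat -> pt)
  (HQbox : forall q, inQ Q q -> inBox x0 x1 y0 y1 q)
  (Hphi : C2_2 phi)
  (Hphi_nonneg : forall q, inQ Q q -> 0 <= phi q)
  (Hn : (3 <= n)%nat)
  (HpQ : forall i, (i < n)%nat -> inQ Q (p i))
  (Hdistinct : forall i j, (i < n)%nat -> (j < n)%nat -> i <> j -> p i <> p j)
  (HMW : forall i, (i < n)%nat -> 0 < MW x0 x1 y0 y1 Q phi n p i) :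
  let p' := fun i => CW x0 x1 y0 y1 Q phi n p i in
  Hcost x0 x1 y0 y1 Q phi n p' <= Hcost x0 x1 y0 y1 Q phi n p /\
  ((exists i, (i < n)%nat /\ p i <> p' i) ->
     Hcost x0 x1 y0 y1 Q phi n p' < Hcost x0 x1 y0 y1 Q phi n p).
Proof.
intros p'.
destruct (HQbox (p 0%nat) (HpQ 0%nat ltac:(lia))) as [[Hx0 Hx1] [Hy0 Hy1]].
set (gap_term := fun i => / 2 * MW x0 x1 y0 y1 Q phi n p i * dist (p i) (p' i) ^ 2).
assert (Hstep : Hcost x0 x1 y0 y1 Q phi n p' <=
  Hcost x0 x1 y0 y1 Q phi n p - sumR (map gap_term (seq 0 n))).
{ apply Hcost_lloyd_step; auto using C2_2_continuity_2d; lra || lia. }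
assert (Hgap : forall i, In i (seq 0 n) -> 0 <= gap_term i).
{ intros i Hi. apply in_seq in Hi. pose proof (HMW i ltac:(lia)).
  pose proof (pow2_ge_0 (dist (p i) (p' i))). unfold gap_term. nra. }
split.
- pose proof (sumR_nonneg _ _ Hgap). lra.
- intros [i [Hi Hne]].
  assert (0 < sumR (map gap_term (seq 0 n))).
  { apply (sumR_pos _ _ i Hgap); [apply in_seq; lia|].
    pose proof (HMW i Hi). pose proof (dist_sq_pos _ _ Hne). unfold gap_term. nra. }
  lra.
Qed.
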